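(* Assume the setting in the context, with $X_A,X_B$ independent conditional on $Y$. Consider the optimization problem of maximizing $MIG^f(h_A,h_B,\mathbf{p})$ over all $h_A:\Sigma_A\to\Delta_\Sigma$, $h_B:\Sigma_B\to\Delta_\Sigma$ and $\mathbf{p}\in\Delta_\Sigma$ with all entries positive. Then: (1) (Solution $\to$ maximizer) For every random variable $Z$ with values in $\Sigma$, jointly distributed with $(X_A,X_B)$ (with $(X_A,X_B)$ having its given distribution), such that $\Pr[Z=y]>0$ for all $y$ and $X_A,X_B$ are independent conditional on $Z$, the triple $h_A^*(x_A):=(\Pr[Z=y\mid X_A=x_A])_{y\in\Sigma}$, $h_B^*(x_B):=(\Pr[Z=y\mid X_B=x_B])_{y\in\Sigma}$, $\mathbf{p}^*:=(\Pr[Z=y])_{y\in\Sigma}$ is a maximizer, and the maximum value equals $MI^f(X_A;X_B)$. (In particular this holds for $Z=Y$.) (2) (Maximizer $\to$ permuted ground truth) If moreover the prior is well-defined, $f$ is differentiable and $f'$ is injective, then for every maximizer $(h_A^*,h_B^*,\mathbf{p}^* )$ there is a permutation $\pi$ of $\Sigma$ such that $h_A^*(x_A)=(\Pr[\pi(Y)=y\mid X_A=x_A])_y$ for all $x_A$, $h_B^*(x_B)=(\Pr[\pi(Y)=y\mid X_B=x_B])_y$ for all $x_B$, and $\mathbf{p}^*=(\Pr[\pi(Y)=y])_y$.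
   Context: Let $\Sigma_A,\Sigma_B,\Sigma$ be finite nonempty sets and $(X_A,X_B,Y)$ random variables with values in $\Sigma_A\times\Sigma_B\times\Sigma$ (joint law called the prior), with $\Pr[X_A=x_A]>0$, $\Pr[X_B=x_B]>0$, $\Pr[Y=y]>0$ for all values. $\Delta_\Sigma$ is the set of probability vectors on $\Sigma$. $K(x_A,x_B):=\frac{\Pr[X_A=x_A,X_B=x_B]}{\Pr[X_A=x_A]\Pr[X_B=x_B]}$. Let $f:[0,\infty)\to\mathbb{R}$ be convex with $f(1)=0$, $f^\star(u):=\sup_{t\ge0}(tu-f(t))$, $\partial f$ its subdifferential, and $MI^f(X_A;X_B):=\sum_{x_A,x_B}\Pr[X_A=x_A]\Pr[X_B=x_B]f(K(x_A,x_B))$. Fix a selection $g$ with $g(t)\in\partial f(t)$ for all $t$ (take $g=f'$ if $f$ is differentiable), and define the reward $R^f(\mathbf{p}_1,\mathbf{p}_2,\mathbf{p}):=g\big(\sum_{y}\mathbf{p}_1(y)\mathbf{p}_2(y)/\mathbf{p}(y)\big)$. The objective is $$MIG^f(h_A,h_B,\mathbf{p}):=\sum_{x_A,x_B}\Pr[X_A=x_A,X_B=x_B]\,R^f(h_A(x_A),h_B(x_B),\mathbf{p})-\sum_{x_A,x_B}\Pr[X_A=x_A]\Pr[X_B=x_B]\,f^\star\big(R^f(h_A(x_A),h_B(x_B),\mathbf{p})\big),$$ which is the expectation of the empirical $f$-mutual information gain (same-task average of $R^f$ minus distinct-task-pair average of $f^\star(R^f)$) over i.i.d. task samples. For a permutation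 $\pi$ of $\Sigma$, $\pi(Y)$ is the relabeled variable. Well-defined prior: consider the system, in unknowns $\mathbf{a}^{x_A}\in\Delta_\Sigma$ ($x_A\in\Sigma_A$), $\mathbf{b}^{x_B}\in\Delta_\Sigma$ ($x_B\in\Sigma_B$), $\mathbf{r}\in\Delta_\Sigma$ with positive entries: $\sum_{y}a^{x_A}_y b^{x_B}_y/r_y=K(x_A,x_B)$ for all $(x_A,x_B)$. The prior is well-defined if for any two solutions $(\{\mathbf{a}^{x_A}\},\{\mathbf{b}^{x_B}\},\mathbf{r})$ and $(\{\mathbf{c}^{x_A}\},\{\mathbf{d}^{x_B}\},\mathbf{r}')$ there is a permutation $\pi$ of $\Sigma$ with $\mathbf{r}=\pi\mathbf{r}'$, $\mathbf{a}^{x_A}=\pi\mathbf{c}^{x_A}$ and $\mathbf{b}^{x_B}=\pi\mathbf{d}^{x_B}$ for all $x_A,x_B$, where $\pi$ acts on vectors by permuting coordinates. *)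

From Stdlib Require Import Reals ClassicalEpsilon.
From mathcomp Require Import all_boot fingroup perm.

Set Implicit Arguments.
Unset Strict Implicit.
Unset Printing Implicit Defensive.

Local Open Scope R_scope.

Definition rsum {T : finType} (F : T -> R) : R := \big[Rplus/0]_(x : T) F x.

Section Defs.
Variables (A B S : finType).

(* a joint pmf of (X_A, X_B, Y) is P : A -> B -> S -> R *)
Definition is_pmf3 (P : A -> B -> S -> R) : Prop :=
  (forall a b y, 0 <= P a b y) /\
  rsum (fun a => rsum (fun b => rsum (fun y => P a b y))) = 1.

Definition PA (P : A -> B -> S -> R) (a : A) : R :=
  rsum (fun b => rsum (fun y => P a b y)).
Definition PB (P : A -> B -> S -> R) (b : B) : R :=
  rsum (fun a => rsum (fun y => P a b y)).
Definition PY (P : A -> B -> S -> R) (y : S) : R :=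
  rsum (fun a => rsum (fun b => P a b y)).
Definition PAB (P : A -> B -> S -> R) (a : A) (b : B) : R :=
  rsum (fun y => P a b y).
Definition PAY (P : A -> B -> S -> R) (a : A) (y : S) : R :=
  rsum (fun b => P a b y).
Definition PBY (P : A -> B -> S -> R) (b : B) (y : S) : R :=
  rsum (fun a => P a b y).

Definition cond_indep (P : A -> B -> S -> R) : Prop :=
  forall a b y, P a b y * PY P y = PAY P a y * PBY P b y.

Definition Kratio (P : A -> B -> S -> R) (a : A) (b : B) : R :=
  PAB P a b / (PA P a * PB P b).

Definition is_dist (v : S -> R) : Prop :=
  (forall y, 0 <= v y) /\ rsum v = 1.

Definition Rf (g : R -> R) (p1 p2 p : S -> R) : R :=
  g (rsum (fun y => p1 y * p2 y / p y)).

Definition MIf (f : R -> R) (P : A -> B -> S -> R) : R :=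
  rsum (fun a => rsum (fun b => PA P a * PB P b * f (Kratio P a b))).

Definition admissible (hA : A -> S -> R) (hB : B -> S -> R) (p : S -> R) : Prop :=
  (forall a, is_dist (hA a)) /\ (forall b, is_dist (hB b)) /\
  is_dist p /\ (forall y, 0 < p y).

Definition solves (P : A -> B -> S -> R)
    (av : A -> S -> R) (bv : B -> S -> R) (r : S -> R) : Prop :=
  (forall a, is_dist (av a)) /\ (forall b, is_dist (bv b)) /\
  is_dist r /\ (forall y, 0 < r y) /\
  (forall a b, rsum (fun y => av a y * bv b y / r y) = Kratio P a b).

Definition permv (pi : {perm S}) (v : S -> R) : S -> R :=
  fun y => v ((pi^-1)%g y).

Definition well_defined_prior (P : A -> B -> S -> R) : Prop :=
  forall av bv r cv dv r',
    solves P av bv r -> solves P cv dv r' ->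
    exists pi : {perm S},
      r = permv pi r' /\ (forall a, av a = permv pi (cv a)) /\
      (forall b, bv b = permv pi (dv b)).
End Defs.

(* Wherever it is used below
   (at u = g(t) with g(t) a subgradient) the supremum is finite and attained. *)
Definition fstar (f : R -> R) (u : R) : R :=
  epsilon (inhabits 0)
    (fun v => is_lub (fun w => exists t, 0 <= t /\ w = t * u - f t) v).

Definition convex_nonneg (f : R -> R) : Prop :=
  forall x y l, 0 <= x -> 0 <= y -> 0 <= l <= 1 ->
    f (l * x + (1 - l) * y) <= l * f x + (1 - l) * f y.

Definition subgrad (f : R -> R) (t u : R) : Prop :=
  forall s, 0 <= s -> f t + u * (s - t) <= f s.

Definition MIG {A B S : finType} (f g : R -> R) (P : A -> B -> S -> R)
    (hA : A -> S -> R) (hB : B -> S -> R) (p : S -> R) : R :=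
  rsum (fun a => rsum (fun b =>
     PAB P a b * Rf g (hA a) (hB b) p
     - PA P a * PB P b * fstar f (Rf g (hA a) (hB b) p))).

Definition is_maximizer {A B S : finType} (f g : R -> R) (P : A -> B -> S -> R)
    (hA : A -> S -> R) (hB : B -> S -> R) (p : S -> R) : Prop :=
  admissible hA hB p /\
  forall hA' hB' p', admissible hA' hB' p' -> MIG f g P hA' hB' p' <= MIG f g P hA hB p.

Definition deriv_nonneg (f g : R -> R) : Prop :=
  (forall t, 0 < t -> derivable_pt_lim f t (g t)) /\
  (forall eps, 0 < eps -> exists delta, 0 < delta /\
     forall h, 0 < h < delta -> Rabs ((f h - f 0) / h - g 0) < eps).

(* By Fenchel-Young, [K u - f*(u) <= f K] for every subgradient [u] of [f] at
   [t >= 0], with equality iff the tangent line at [t] touches [f] at [K].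
   Hence the [(x_A, x_B)] summand of [MIG] is at most the matching summand of
   [MI^f], with gap [P(x_A) P(x_B) (f K - f t - g t (K - t))], where [t] is
   the agreement [sum_y h_A(x_A)_y h_B(x_B)_y / p_y] and [K = K(x_A, x_B)].
   If [X_A, X_B] are independent given [Z], the posteriors of [Z] have
   agreement exactly [K], so they attain [MI^f] and are maximizers.
   Conversely a maximizer attains [MI^f] (the posteriors of [Y] do), so every
   gap vanishes; injectivity of [g] and convexity then force [t = K], i.e. the
   maximizer solves the system of the well-definedness condition, and
   uniqueness of its solutions up to relabelling gives the permutation. *)
From HB Require Import structures.
From Stdlib Require Import Reals Lra ClassicalEpsilon.
From mathcomp Require Import all_boot fingroup perm.

Set Implicit Arguments.
Unset Strict Implicit.
Unset Printing Implicit Defensive.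

Local Open Scope R_scope.

HB.instance Definition _ :=
  Monoid.isComLaw.Build R 0 Rplus (fun x y z => esym (Rplus_assoc x y z))
    Rplus_comm Rplus_0_l.

Section RealSums.
Variable T : finType.
Implicit Types F G : T -> R.

Lemma eq_rsum F G : (forall x, F x = G x) -> rsum F = rsum G.
Proof. by move=> FG; apply: eq_bigr => x _. Qed.

Lemma rsum_div F c : rsum (fun x => F x / c) = rsum F / c.
Proof.
apply: (big_rec2 (fun s1 s2 => s1 = s2 / c)); first by rewrite /Rdiv Rmult_0_l.
by move=> x s1 s2 _ ->; rewrite /Rdiv; ring.
Qed.

Lemma le_rsum F G : (forall x, F x <= G x) -> rsum F <= rsum G.
Proof.
move=> FG; apply: (big_ind2 (fun s1 s2 => s1 <= s2)) => [|s1 s2 s1' s2'|x _].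
- exact: Rle_refl.
- exact: Rplus_le_compat.
- exact: FG.
Qed.

Lemma rsum_ge0 F : (forall x, 0 <= F x) -> 0 <= rsum F.
Proof. by move=> F0; have := @le_rsum (fun _ => 0) F F0; rewrite /rsum big1. Qed.

Lemma rsum_le_eq F G :
  (forall x, F x <= G x) -> rsum F = rsum G -> forall x, F x = G x.
Proof.
move=> FG + x; rewrite /rsum (bigD1 x) //= [in RHS](bigD1 x) //=.
have : \big[Rplus/0]_(i | i != x) F i <= \big[Rplus/0]_(i | i != x) G i.
  apply: (big_ind2 (fun s1 s2 => s1 <= s2)) => [|s1 s2 s1' s2'|i _].
  - exact: Rle_refl.
  - exact: Rplus_le_compat.
  - exact: FG.
by have := FG x; lra.
Qed.

End RealSums.

Lemma exchange_rsum (T1 T2 : finType) (F : T1 -> T2 -> R) :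
  rsum (fun x => rsum (F x)) = rsum (fun y => rsum (fun x => F x y)).
Proof. exact: exchange_big. Qed.

Lemma rsum2_le_eq (T1 T2 : finType) (F G : T1 -> T2 -> R) :
  (forall x y, F x y <= G x y) ->
  rsum (fun x => rsum (F x)) = rsum (fun x => rsum (G x)) ->
  forall x y, F x y = G x y.
Proof.
move=> FG E x; apply: rsum_le_eq; first exact: FG.
exact: (@rsum_le_eq _ (fun x => rsum (F x)) (fun x => rsum (G x))
          (fun x => le_rsum (FG x)) E).
Qed.

Section FenchelYoung.
Variable f : R -> R.

Lemma fstar_subgrad t u : 0 <= t -> subgrad f t u -> fstar f u = t * u - f t.
Proof.
move=> t0 ftu.
have lub : is_lub (fun w => exists s, 0 <= s /\ w = s * u - f s) (t * u - f t).
  split=> [w [s [s0 ->]]|b ub]; last by apply: ub; exists t.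
  by have := ftu s s0; lra.
exact: is_lub_u (epsilon_spec (inhabits 0) _ (ex_intro _ _ lub)) lub.
Qed.

Variable g : R -> R.
Hypothesis f_convex : convex_nonneg f.
Hypothesis g_subgrad : forall t, 0 <= t -> subgrad f t (g t).
Hypothesis g_inj : forall s t, 0 <= s -> 0 <= t -> g s = g t -> s = t.

(* At the midpoint [s] of [t] and [K] the tangent at [t] still touches [f];
   adding the supporting lines at [s] evaluated at [t] and [K] then forces
   [g s = g t]. *)
Lemma tangent_contact_eq t K :
  0 <= t -> 0 <= K -> f K = f t + g t * (K - t) -> K = t.
Proof.
move=> t0 K0 fK; case: (Req_dec K t) => // neKt; exfalso.
pose s := (K + t) / 2.
have s0 : 0 <= s by rewrite /s; lra.
have conv := @f_convex K t (/ 2) K0 t0 ltac:(lra).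
rewrite (_ : / 2 * K + (1 - / 2) * t = s) in conv; last by rewrite /s; field.
have sup_t := g_subgrad t0 s0.
have sup_sK := g_subgrad s0 K0.
have sup_st := g_subgrad s0 t0.
have fs : f s = f t + g t * (s - t) by rewrite /s in conv sup_t *; lra.
have gap : (g t - g s) * (K - t) = 0.
  by rewrite fs fK in sup_sK; rewrite fs in sup_st; rewrite /s in sup_sK sup_st *; lra.
have gts : g t = g s by case: (Rmult_integral _ _ gap); lra.
by have := g_inj t0 s0 gts; rewrite /s; lra.
Qed.

End FenchelYoung.

Section Objective.
Variables (A B S : finType) (P : A -> B -> S -> R) (f g : R -> R).
Hypothesis P_pmf : is_pmf3 P.
Hypothesis PA_gt0 : forall a, 0 < PA P a.
Hypothesis PB_gt0 : forall b, 0 < PB P b.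
Hypothesis g_subgrad : forall t, 0 <= t -> subgrad f t (g t).

Definition agreement (hA : A -> S -> R) (hB : B -> S -> R) (p : S -> R) a b :=
  rsum (fun y => hA a y * hB b y / p y).

Definition MIG_term (hA : A -> S -> R) (hB : B -> S -> R) (p : S -> R) a b :=
  PAB P a b * Rf g (hA a) (hB b) p - PA P a * PB P b * fstar f (Rf g (hA a) (hB b) p).

Definition MIf_term a b := PA P a * PB P b * f (Kratio P a b).

Lemma PAB_Kratio a b : PAB P a b = PA P a * PB P b * Kratio P a b.
Proof. by rewrite /Kratio; have := PA_gt0 a; have := PB_gt0 b => *; field; lra. Qed.

Lemma Kratio_ge0 a b : 0 <= Kratio P a b.
Proof.
apply: Rmult_le_pos; first by apply: rsum_ge0 => y; apply: P_pmf.1.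
by apply/Rlt_le/Rinv_0_lt_compat/Rmult_lt_0_compat.
Qed.

Lemma agreement_ge0 hA hB p a b : admissible hA hB p -> 0 <= agreement hA hB p a b.
Proof.
move=> [hA_dist [hB_dist [_ p_gt0]]]; apply: rsum_ge0 => y.
apply: Rmult_le_pos; first exact: Rmult_le_pos ((hA_dist a).1 y) ((hB_dist b).1 y).
exact/Rlt_le/Rinv_0_lt_compat.
Qed.

Lemma MIf_term_sub_MIG_term hA hB p a b : admissible hA hB p ->
  let t := agreement hA hB p a b in let K := Kratio P a b in
  MIf_term a b - MIG_term hA hB p a b = PA P a * PB P b * (f K - (f t + g t * (K - t))).
Proof.
move=> adm t K; have t0 : 0 <= t := agreement_ge0 a b adm.
rewrite /MIf_term /MIG_term /Rf PAB_Kratio -/(agreement hA hB p a b) -/t -/K.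
by rewrite (fstar_subgrad t0 (g_subgrad t0)); ring.
Qed.

Lemma MIG_term_le hA hB p a b : admissible hA hB p -> MIG_term hA hB p a b <= MIf_term a b.
Proof.
move=> adm; have := MIf_term_sub_MIG_term a b adm => /= gap.
have t0 := agreement_ge0 a b adm.
have tangent := g_subgrad t0 (Kratio_ge0 a b).
have w0 := Rmult_lt_0_compat _ _ (PA_gt0 a) (PB_gt0 b).
nra.
Qed.

Lemma MIG_term_eq hA hB p a b : admissible hA hB p ->
  agreement hA hB p a b = Kratio P a b -> MIG_term hA hB p a b = MIf_term a b.
Proof. by move=> adm tK; have := MIf_term_sub_MIG_term a b adm => /=; rewrite tK; lra. Qed.

Lemma MIG_le_MIf hA hB p : admissible hA hB p -> MIG f g P hA hB p <= MIf f P.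
Proof. by move=> adm; do 2!apply: le_rsum => ?; apply: MIG_term_le. Qed.

Lemma MIG_eq_MIf_agreement hA hB p :
  convex_nonneg f -> (forall s t, 0 <= s -> 0 <= t -> g s = g t -> s = t) ->
  admissible hA hB p -> MIG f g P hA hB p = MIf f P ->
  forall a b, agreement hA hB p a b = Kratio P a b.
Proof.
move=> f_convex g_inj adm E a b.
have tight := rsum2_le_eq (fun a b => MIG_term_le a b adm) E a b.
have := MIf_term_sub_MIG_term a b adm => /=; rewrite -/(MIG_term _ _ _ a b) tight.
rewrite Rminus_diag => /esym/Rmult_integral [|gap].
  by have := Rmult_lt_0_compat _ _ (PA_gt0 a) (PB_gt0 b); lra.
symmetry; apply: (tangent_contact_eq f_convex g_subgrad g_inj) => //.
- exact: agreement_ge0.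
- exact: Kratio_ge0.
- lra.
Qed.

Section Posterior.
Variable Q : A -> B -> S -> R.
Hypothesis Q_ge0 : forall a b y, 0 <= Q a b y.
Hypothesis PAB_Q : forall a b, PAB Q a b = PAB P a b.
Hypothesis PY_Q_gt0 : forall y, 0 < PY Q y.
Hypothesis Q_cond_indep : cond_indep Q.

Definition posteriorA a y := PAY Q a y / PA P a.
Definition posteriorB b y := PBY Q b y / PB P b.

Lemma posterior_admissible : admissible posteriorA posteriorB (PY Q).
Proof.
split; [|split; [|split]].
- move=> a; split=> [y|].
    by apply: Rmult_le_pos; [apply: rsum_ge0 | exact/Rlt_le/Rinv_0_lt_compat].
  rewrite /posteriorA rsum_div /PAY -exchange_rsum.
  rewrite (eq_rsum (G := fun b => PAB P a b)); last by move=> b; apply: PAB_Q a b.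
  by change (PA P a / PA P a = 1); have := PA_gt0 a => ?; field; lra.
- move=> b; split=> [y|].
    by apply: Rmult_le_pos; [apply: rsum_ge0 | exact/Rlt_le/Rinv_0_lt_compat].
  rewrite /posteriorB rsum_div /PBY -exchange_rsum.
  rewrite (eq_rsum (G := fun a => PAB P a b)); last by move=> a; apply: PAB_Q a b.
  by change (PB P b / PB P b = 1); have := PB_gt0 b => ?; field; lra.
- split=> [y|]; first exact: Rlt_le.
  rewrite -P_pmf.2 /PY exchange_rsum; apply: eq_rsum => a.
  by rewrite exchange_rsum; apply: eq_rsum => b; apply: PAB_Q.
- exact: PY_Q_gt0.
Qed.

Lemma posterior_agreement a b :
  agreement posteriorA posteriorB (PY Q) a b = Kratio P a b.
Proof.
rewrite /agreement /Kratio -PAB_Q /PAB -rsum_div; apply: eq_rsum => y.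
have := PA_gt0 a; have := PB_gt0 b; have := PY_Q_gt0 y => PY0 PB0 PA0.
rewrite /posteriorA /posteriorB.
transitivity (PAY Q a y * PBY Q b y / PY Q y / (PA P a * PB P b)); first by field; lra.
by rewrite -Q_cond_indep; field; lra.
Qed.

Lemma MIG_posterior : MIG f g P posteriorA posteriorB (PY Q) = MIf f P.
Proof.
do 2!apply: eq_rsum => ?.
exact: MIG_term_eq posterior_admissible (posterior_agreement _ _).
Qed.

Lemma posterior_is_maximizer : is_maximizer f g P posteriorA posteriorB (PY Q).
Proof.
split=> [|hA hB p adm]; first exact: posterior_admissible.
by rewrite MIG_posterior; apply: MIG_le_MIf.
Qed.

End Posterior.

Section GroundTruth.
Hypothesis PY_gt0 : forall y, 0 < PY P y.
Hypothesis P_cond_indep : cond_indep P.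

Lemma posterior_solves : solves P (posteriorA P) (posteriorB P) (PY P).
Proof.
have [adm_A [adm_B [adm_p p_gt0]]] := posterior_admissible P_pmf.1 (fun _ _ => erefl) PY_gt0.
by do 4!split=> //; apply: posterior_agreement.
Qed.

Lemma maximizer_solves hA hB p :
  convex_nonneg f -> (forall s t, 0 <= s -> 0 <= t -> g s = g t -> s = t) ->
  is_maximizer f g P hA hB p -> solves P hA hB p.
Proof.
move=> f_convex g_inj [adm is_max].
have MIG_eq : MIG f g P hA hB p = MIf f P.
  apply: Rle_antisym; first exact: MIG_le_MIf.
  rewrite -(MIG_posterior P_pmf.1 (fun _ _ => erefl) PY_gt0 P_cond_indep).
  exact/is_max/(posterior_admissible P_pmf.1 (fun _ _ => erefl) PY_gt0).
have [adm_A [adm_B [adm_p p_gt0]]] := adm.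
by do 4!split=> //; apply: MIG_eq_MIf_agreement.
Qed.

End GroundTruth.

End Objective.

Theorem mainTheorem4 (A B S : finType) (P : A -> B -> S -> R) (f g : R -> R)
  (HP : is_pmf3 P)
  (HPA : forall a, 0 < PA P a) (HPB : forall b, 0 < PB P b)
  (HPY : forall y, 0 < PY P y)
  (Hci : cond_indep P)
  (Hconv : convex_nonneg f) (Hf1 : f 1 = 0)
  (Hg : forall t, 0 <= t -> subgrad f t (g t)) :
  (forall Q : A -> B -> S -> R,
     (forall a b y, 0 <= Q a b y) ->
     (forall a b, PAB Q a b = PAB P a b) ->
     (forall y, 0 < PY Q y) ->
     cond_indep Q ->
     is_maximizer f g P (fun a y => PAY Q a y / PA P a)
                        (fun b y => PBY Q b y / PB P b)
                        (fun y => PY Q y) /\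
     MIG f g P (fun a y => PAY Q a y / PA P a)
               (fun b y => PBY Q b y / PB P b)
               (fun y => PY Q y) = MIf f P) /\
  (well_defined_prior P -> deriv_nonneg f g ->
   (forall s t, 0 <= s -> 0 <= t -> g s = g t -> s = t) ->
   forall hA hB p, is_maximizer f g P hA hB p ->
   exists pi : {perm S},
     (forall a y, hA a y = PAY P a ((pi^-1)%g y) / PA P a) /\
     (forall b y, hB b y = PBY P b ((pi^-1)%g y) / PB P b) /\
     (forall y, p y = PY P ((pi^-1)%g y))).
Proof.
split=> [Q Q_ge0 PAB_Q PY_Q_gt0 Q_ci | well_def _ g_inj hA hB p is_max].
  split; first exact: posterior_is_maximizer.
  exact: MIG_posterior.
have [pi [-> [hA_pi hB_pi]]] := well_def _ _ _ _ _ _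
  (maximizer_solves HP HPA HPB Hg HPY Hci Hconv g_inj is_max)
  (posterior_solves HP HPA HPB HPY Hci).
by exists pi; do !split=> *; rewrite ?hA_pi ?hB_pi.
Qed.
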